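(* Let $q$ be a prime power, $g,s\ge 1$ integers, and $V=\mathrm{GF}(q^g)^s$ regarded as a $gs$-dimensional vector space over $\mathrm{GF}(q)$. For every integer $k\ge 1$, the number $\#\mathcal{F}_k$ of fat $k$-dimensional $\mathrm{GF}(q)$-subspaces of $V$ is \[ \#\mathcal{F}_k=q^{(g-1)\binom{k}{2}}\prod_{i=0}^{k-1}\frac{q^{g(s-i)}-1}{q^{k-i}-1}. \]
   Context: A $\mathrm{GF}(q)$-subspace $U\le V$ is called fat if $\dim_{\mathrm{GF}(q^g)}\langle U\rangle_{\mathrm{GF}(q^g)}=\dim_{\mathrm{GF}(q)}U$, where $\langle U\rangle_{\mathrm{GF}(q^g)}$ is the $\mathrm{GF}(q^g)$-span of $U$; equivalently, some (and then every) $\mathrm{GF}(q)$-basis of $U$ is linearly independent over $\mathrm{GF}(q^g)$. $\mathcal{F}_k$ denotes the set of fat $k$-dimensional $\mathrm{GF}(q)$-subspaces of $V$. *)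

From HB Require Import structures.
From mathcomp Require Import all_boot all_order all_algebra all_field.
Set Implicit Arguments. Unset Strict Implicit. Unset Printing Implicit Defensive.
Import Order.TTheory GRing.Theory Num.Theory.
Local Open Scope ring_scope.

(* F = GF(q) (any finite field), L : fieldExtType F with \dim {:L} = g,
   so L = GF(q^g).  V = L^s, viewed as a GF(q)-vector space: the type of
   finite functions 'I_s -> L with its canonical vectType F structure,
   wrapped in finvect_type so that it is also a finType. *)
Definition Vsp (F : finFieldType) (L : fieldExtType F) (s : nat) : predArgType :=
  finvect_type {ffun 'I_s -> L}.

Section Fat.
Variables (F : finFieldType) (L : fieldExtType F) (s : nat).
Local Notation V := (Vsp L s).

(* Dimension over L of the L-span of an F-subspace U of V: the rank over L
   of the matrix whose rows are the vectors of an F-basis of U (the L-span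
   of U is the L-span of any F-basis of U). *)
Definition Lspan_dim (U : {vspace V}) : nat :=
  \rank (\matrix_(i < \dim U, j < s)
           ((tnth (vbasis U) i : {ffun 'I_s -> L}) j)).

Definition fat (U : {vspace V}) : bool := Lspan_dim U == \dim U.

Definition vspace_of_set (A : {set V}) : {vspace V} := <<enum A>>%VS.

Definition is_subspace_set (A : {set V}) : bool :=
  A == [set v | v \in vspace_of_set A].

(* F_k, the set of fat k-dimensional F-subspaces of V, each subspace
   represented by its (uniquely determined) set of vectors. *)
Definition fat_subspaces (k : nat) : {set {set V}} :=
  [set A : {set V} | [&& is_subspace_set A,
                         \dim (vspace_of_set A) == k &
                         fat (vspace_of_set A)]].
End Fat.

From HB Require Import structures.
From mathcomp Require Import all_boot all_order all_algebra all_field.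
From mathcomp Require Import ring zify.
Set Implicit Arguments. Unset Strict Implicit. Unset Printing Implicit Defensive.
Import Order.TTheory GRing.Theory Num.Theory.
Local Open Scope ring_scope.

(* An ordered F-basis of a fat k-subspace U of V = L^s is linearly independent
   over L, so stacking it gives a k x s matrix over L of rank k; conversely the
   rows of such a matrix are F-independent and span a fat subspace.  Fixing one
   reference basis B_U of each U, the map (U, P) |-> P B_U is therefore a bijection
   from (fat k-subspaces) x GL_k(F) onto the rank-k matrices in L^(k x s), whence
   #F_k * prod_(i<k) (q^k - q^i) = prod_(i<k) (q^(gs) - q^(gi)), both products
   counting full-rank matrices one row at a time.  The closed form is then a
   rearrangement of the quotient. *)

Lemma row_free_col_mx_rV (K : fieldType) m n (v : 'rV[K]_n) (A : 'M_(m, n)) :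
  row_free (col_mx v A) = row_free A && ~~ (v <= A)%MS.
Proof.
rewrite /row_free -addsmxE.
have [vA | nvA] := boolP (v <= A)%MS.
  by rewrite (addsmx_idPr vA) andbF; apply/eqP; have := rank_leq_row A; lia.
have [le_vA _] := mxrank_adds_leqif v A; have le_v1 := rank_leq_row v.
have lt_A_vA : (\rank A < \rank (v + A))%N.
  by rewrite (ltn_leqif (mxrank_leqif_sup (addsmxSr v A))) addsmx_sub negb_and nvA.
by rewrite andbT; apply/eqP/eqP; lia.
Qed.

Section CardRowFree.
Variable K : finFieldType.

Lemma card_notsubmx_row_free m n (A : 'M[K]_(m, n)) :
  row_free A -> #|[set v : 'rV_n | ~~ (v <= A)%MS]| = (#|K| ^ n - #|K| ^ m)%N.
Proof.
move=> freeA; have -> : [set v : 'rV_n | ~~ (v <= A)%MS] = ~: [set u *m A | u : 'rV_m].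
  apply/setP => v; rewrite !inE; congr (~~ _).
  by apply/submxP/imsetP => [[u ->] | [u _ ->]]; exists u.
rewrite cardsCs setCK card_imset ?card_mx ?mul1n //.
exact: row_free_inj.
Qed.

Lemma card_row_free m n :
  #|[set A : 'M[K]_(m, n) | row_free A]| = (\prod_(i < m) (#|K| ^ n - #|K| ^ i))%N.
Proof.
elim: m => [|m IHm].
  rewrite big_ord0 -[RHS](card_mx K 0 n) -cardsT; congr #|pred_of_set _|.
  by apply/setP => A; rewrite !inE /row_free -leqn0 rank_leq_row.
pose S := [set p : 'M[K]_(m, n) * 'rV_n | row_free p.1 && ~~ (p.2 <= p.1)%MS].
have -> : [set A : 'M[K]_(1 + m, n) | row_free A] = [set col_mx p.2 p.1 | p in S].
  apply/setP => A; rewrite inE; apply/idP/imsetP => [freeA | [p Sp ->]].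
    exists (dsubmx A, usubmx A); last by rewrite vsubmxK.
    by rewrite inE -row_free_col_mx_rV vsubmxK.
  by rewrite row_free_col_mx_rV; rewrite inE in Sp.
rewrite card_in_imset => [|[A1 v1] [A2 v2] _ _ /(@eq_col_mx _ 1 m n)[/= -> ->] //].
rewrite big_ord_recr /= -IHm -sum_nat_const -sum1_card.
rewrite (eq_bigl (fun p => row_free p.1 && ~~ (p.2 <= p.1)%MS)) => [|p]; last first.
  by rewrite inE.
rewrite -(pair_big_dep (fun A => row_free A) (fun A v => ~~ (v <= A)%MS) (fun _ _ => 1%N)).
apply: eq_big => [A | A freeA] /=; first by rewrite inE.
by rewrite sum1_card -(card_notsubmx_row_free freeA); apply: eq_card => v; rewrite inE.
Qed.

End CardRowFree.

Section FatSubspaces.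
Variables (F : finFieldType) (L : fieldExtType F) (s k : nat).
HB.instance Definition _ := Finite.copy L (finvect_type L).
Local Notation V := (Vsp L s).

Definition row_vec m (M : 'M[L]_(m, s)) (i : 'I_m) : V := [ffun j => M i j].
Definition row_vecs (M : 'M[L]_(k, s)) : k.-tuple V := [tuple row_vec M i | i < k].
Definition tuple_mx (X : k.-tuple V) : 'M[L]_(k, s) := \matrix_(i, j) tnth X i j.
(* Junk unless \dim U = k: vbasis U is then truncated or padded with zeros. *)
Definition basis_tuple (U : {vspace V}) : k.-tuple V := [tuple (vbasis U)`_i | i < k].
Definition basis_mx (U : {vspace V}) : 'M[L]_(k, s) := tuple_mx (basis_tuple U).

Lemma row_vec_inj m (M N : 'M[L]_(m, s)) :
  (forall i, row_vec M i = row_vec N i) -> M = N.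
Proof.
by move=> eqMN; apply/matrixP => i j; have /ffunP/(_ j) := eqMN i; rewrite !ffunE.
Qed.

Lemma row_vec_tuple_mx X i : row_vec (tuple_mx X) i = tnth X i.
Proof. by apply/ffunP => j; rewrite ffunE mxE. Qed.

Lemma row_vec_map_mulmx m (P : 'M[F]_(m, k)) (M : 'M[L]_(k, s)) i :
  row_vec (map_mx (in_alg L) P *m M) i = \sum_l P i l *: row_vec M l.
Proof.
apply/ffunP => j; rewrite ffunE mxE sum_ffunE; apply: eq_bigr => l _.
by rewrite !ffunE mxE mulr_algl.
Qed.

Lemma free_row_vecs M : row_free M -> free (row_vecs M).
Proof.
move=> freeM; apply/freeP => c sum_c0 i.
have row_vec0 r : row_vec (0 : 'M_(1, s)) r = 0 by apply/ffunP => j; rewrite !ffunE mxE.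
have /row_vec_inj/eqP :
    forall r, row_vec (map_mx (in_alg L) (\row_l c l) *m M) r = row_vec 0 r.
  move=> r; rewrite row_vec0 -sum_c0 row_vec_map_mulmx; apply: eq_bigr => l _.
  by rewrite mxE nth_mktuple.
rewrite mulmx_free_eq0 // => /eqP/rowP/(_ i); rewrite !mxE => /eqP.
by rewrite scaler_eq0 oner_eq0 orbF => /eqP.
Qed.

Lemma dim_span_row_vecs M : row_free M -> \dim <<row_vecs M>> = k.
Proof. by move/free_row_vecs/eqP; rewrite size_tuple. Qed.

Lemma basis_tupleE U : \dim U = k -> basis_tuple U = vbasis U :> seq V.
Proof.
rewrite /basis_tuple; case: _ / => /=.
by rewrite -[RHS]map_tnth_enum; apply: eq_map => i; rewrite (tnth_nth 0).
Qed.

Lemma basis_of_basis_tuple U : \dim U = k -> basis_of U (basis_tuple U).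
Proof. by move/basis_tupleE ->; apply: vbasisP. Qed.

Lemma Lspan_dim_basis_mx U : \dim U = k -> Lspan_dim U = \rank (basis_mx U).
Proof.
rewrite /Lspan_dim /basis_mx /basis_tuple.
move: (vbasis U); move: (\dim U) => n X dimU; subst n; congr (\rank _).
by apply/matrixP => i j; rewrite !mxE tnth_mktuple (tnth_nth 0).
Qed.

Lemma vspace_of_setK (U : {vspace V}) : vspace_of_set [set v | v \in U] = U.
Proof.
apply/vspaceP => v; apply/idP/idP => [|Uv].
  by apply/subvP/span_subvP => w; rewrite mem_enum inE.
by apply: memv_span; rewrite mem_enum inE.
Qed.

Lemma in_fat_subspaces A : A \in fat_subspaces L s k ->
  [/\ A = [set v | v \in vspace_of_set A], \dim (vspace_of_set A) = k
     & row_free (basis_mx (vspace_of_set A))].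
Proof.
rewrite inE => /and3P[/eqP defA /eqP dimA]; rewrite /fat Lspan_dim_basis_mx // dimA.
by split.
Qed.

Definition change_basis_mx (x : {set V} * 'M[F]_k) : 'M[L]_(k, s) :=
  map_mx (in_alg L) x.2 *m basis_mx (vspace_of_set x.1).

Let frames := setX (fat_subspaces L s k) [set P : 'M[F]_k | row_free P].

Lemma change_basis_mx_free x : x \in frames -> row_free (change_basis_mx x).
Proof.
case: x => A P; rewrite in_setX => /andP[/in_fat_subspaces[_ _ freeB]].
by rewrite inE => freeP; rewrite /row_free mxrankMfree // mxrank_map.
Qed.

Lemma span_change_basis_mx x :
  x \in frames -> <<row_vecs (change_basis_mx x)>>%VS = vspace_of_set x.1.
Proof.
move=> x_frame; have freeM := change_basis_mx_free x_frame.
case: x x_frame freeM => A P.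
rewrite in_setX => /andP[/in_fat_subspaces[_ dimU _] _] freeM.
apply/eqP; rewrite eqEdim dim_span_row_vecs // dimU leqnn andbT.
apply/span_subvP => _ /mapP[i _ ->]; rewrite row_vec_map_mulmx.
apply: rpred_sum => l _; rewrite rpredZ // row_vec_tuple_mx.
by apply: (basis_mem (basis_of_basis_tuple dimU)); apply: mem_tnth.
Qed.

Lemma change_basis_mx_inj : {in frames &, injective change_basis_mx}.
Proof.
move=> [A1 P1] [A2 P2] x1_frame x2_frame eqM.
have eqU : vspace_of_set A1 = vspace_of_set A2.
  by rewrite -(span_change_basis_mx x1_frame) -(span_change_basis_mx x2_frame) eqM.
move: x1_frame x2_frame eqM; rewrite !in_setX /=.
move=> /andP[/in_fat_subspaces[defA1 _ freeB] _] /andP[/in_fat_subspaces[defA2 _ _] _].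
rewrite /change_basis_mx /= eqU in freeB * => /(row_free_inj freeB)/map_mx_inj ->.
by rewrite defA1 defA2 eqU.
Qed.

Lemma change_basis_mx_onto : change_basis_mx @: frames = [set M | row_free M].
Proof.
apply/setP => M; rewrite inE; apply/imsetP/idP => [[x x_frame ->] | freeM].
  exact: change_basis_mx_free.
pose U := <<row_vecs M>>%VS; have dimU : \dim U = k := dim_span_row_vecs freeM.
pose P := \matrix_(i, l) coord (basis_tuple U) l (row_vec M i).
have defM : M = map_mx (in_alg L) P *m basis_mx U.
  apply: row_vec_inj => i; rewrite row_vec_map_mulmx.
  rewrite {1}(@coord_span _ _ _ (basis_tuple U) (row_vec M i)).
    by apply: eq_bigr => l _; rewrite mxE -tnth_nth row_vec_tuple_mx.
  rewrite (span_basis (basis_of_basis_tuple dimU)) memv_span //.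
  by rewrite -tnth_mktuple mem_tnth.
have rankM : \rank M = k by apply/eqP.
have freeB : row_free (basis_mx U).
  by rewrite -row_leq_rank -[X in (X <= _)%N]rankM defM mxrankM_maxr.
have freeP : row_free P.
  rewrite -row_leq_rank -(mxrank_map (in_alg L)) -[X in (X <= _)%N]rankM defM.
  exact: mxrankM_maxl.
exists ([set v | v \in U], P); last by rewrite /change_basis_mx vspace_of_setK.
rewrite !inE /is_subspace_set /fat vspace_of_setK eqxx dimU eqxx /=.
by rewrite Lspan_dim_basis_mx //; apply/andP.
Qed.

Lemma card_fat_subspaces_mul :
  (#|fat_subspaces L s k| * #|[set P : 'M[F]_k | row_free P]|)%N
    = #|[set M : 'M[L]_(k, s) | row_free M]|.
Proof.
by rewrite -cardsX -change_basis_mx_onto card_in_imset //; apply: change_basis_mx_inj.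
Qed.

Lemma card_fat_subspaces_prod :
  (#|fat_subspaces L s k| * \prod_(i < k) (#|F| ^ k - #|F| ^ i))%N
    = (\prod_(i < k) (#|F| ^ (\dim {:L} * s) - #|F| ^ (\dim {:L} * i)))%N.
Proof.
have cardL : #|L| = (#|F| ^ \dim {:L})%N.
  by rewrite -(card_vspacef (Vector.class L)) card_vspace.
rewrite -!card_row_free card_fat_subspaces_mul card_row_free.
by apply: eq_bigr => i _; rewrite cardL -!expnM.
Qed.

Lemma card_fat_subspaces_eq0 : (s < k)%N -> #|fat_subspaces L s k| = 0%N.
Proof.
move=> lt_sk; have := card_fat_subspaces_prod.
rewrite [in RHS](bigD1 (Ordinal lt_sk)) //= subnn mul0n => /eqP.
have q_gt1 := finNzRing_gt1 F.
have GL_gt0 : (0 < \prod_(i < k) (#|F| ^ k - #|F| ^ i))%N.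
  by rewrite prodn_gt0 // => i; rewrite subn_gt0 ltn_exp2l.
by rewrite muln_eq0 (gtn_eqF GL_gt0) orbF => /eqP.
Qed.

End FatSubspaces.

Lemma gauss_factorE (R : numFieldType) (q : R) (g s k i : nat) :
  1 < q -> (0 < g)%N -> (i <= s)%N -> (i < k)%N ->
  (q ^+ (g * s) - q ^+ (g * i)) / (q ^+ k - q ^+ i)
    = q ^+ ((g - 1) * i) * ((q ^+ (g * (s - i)) - 1) / (q ^+ (k - i) - 1)).
Proof.
move=> q_gt1 g_gt0 le_is lt_ik.
have qi_neq0 : q ^+ i != 0 by rewrite expf_neq0 // gt_eqF // (lt_trans ltr01).
have qki_neq1 : q ^+ (k - i) - 1 != 0.
  by rewrite subr_eq0 gt_eqF // exprn_egt1 // subn_eq0 -ltnNge.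
rewrite -[in q ^+ k](subnKC (ltnW lt_ik)) -[in q ^+ (g * s)](subnKC le_is) mulnDr.
have -> : (g * i = (g - 1) * i + i)%N by rewrite mulnBl mul1n subnK // leq_pmull.
rewrite !exprD; field.
by rewrite qki_neq1 -[X in _ - X]mulr1 -mulrBr mulf_neq0.
Qed.

Lemma gauss_quotient (R : numFieldType) (q : R) (g s k : nat) :
  1 < q -> (0 < g)%N -> (k <= s)%N ->
  (\prod_(i < k) (q ^+ (g * s) - q ^+ (g * i))) / \prod_(i < k) (q ^+ k - q ^+ i)
    = q ^+ ((g - 1) * 'C(k, 2))
      * \prod_(i < k) ((q ^+ (g * (s - i)) - 1) / (q ^+ (k - i) - 1)).
Proof.
move=> q_gt1 g_gt0 le_ks.
rewrite -prodf_div -bin2_sum big_mkord big_distrr /= -prodrXr -big_split /=.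
apply: eq_bigr => i _; apply: gauss_factorE => //.
exact: leq_trans (ltnW (ltn_ord i)) le_ks.
Qed.

Theorem lemma12 (F : finFieldType) (L : fieldExtType F) (s k : nat) :
  (1 <= s)%N -> (1 <= k)%N ->
  let q : rat := (#|F|)%:R in
  let g : nat := \dim {:L} in
  (#|fat_subspaces L s k|)%:R =
    q ^+ ((g - 1) * 'C(k, 2)) *
    \prod_(i < k) ((q ^ ((g%:Z) * (s%:Z - (i : nat)%:Z)) - 1)
                   / (q ^+ (k - i) - 1)).
Proof.
(* The count holds for all s and k. *)
move=> _ _ q g; have q_gt1 : 1 < q by rewrite ltr1n finNzRing_gt1.
have [le_ks | lt_sk] := leqP k s; last first.
  rewrite card_fat_subspaces_eq0 // (bigD1 (Ordinal lt_sk)) //=.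
  by rewrite !(subrr, mulr0, mul0r, expr0z).
have natrBX a b : (a <= b)%N -> ((#|F| ^ b - #|F| ^ a)%N%:R : rat) = q ^+ b - q ^+ a.
  by move=> le_ab; rewrite natrB ?leq_exp2l ?finNzRing_gt1 // !natrX.
have GL_neq0 : \prod_(i < k) (q ^+ k - q ^+ i) != 0.
  by apply/prodf_neq0 => i _; rewrite subr_eq0 gt_eqF // ltr_eXn2l.
have := congr1 (fun n => n%:R : rat) (card_fat_subspaces_prod L s k).
rewrite /= natrM !natr_prod.
under eq_bigr => i _ do rewrite natrBX ?(ltnW (ltn_ord i)) //.
under [in RHS]eq_bigr => i _
  do rewrite natrBX ?leq_mul2l ?(leq_trans (ltnW (ltn_ord i))) ?orbT //.
move/(canRL (mulfK GL_neq0)) ->; rewrite gauss_quotient ?adim_gt0 //.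
congr (_ * _); apply: eq_bigr => i _.
by rewrite subzn ?(leq_trans (ltnW (ltn_ord i))) // -PoszM -exprnP.
Qed.
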